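(* Let $n,p,d$ be positive integers with $n>p$, and let $P(t)$ be the $(p-1)\times(p-1)$ matrix whose $(i,j)$ entry ($1\le i,j\le p-1$) is $\sum_{k\ge0}\binom{p-i}{k}\binom{n-1-j}{k}t^k$. Then $$\frac{\det(P(t^{d-1}))}{t^{(d-1)\binom{p-1}{2}}}\frac{(1-t^d)^p(1-t^{d-1})^{n-p}}{(1-t)^n}=\left(\sum_{k=0}^{p-1}\binom{n-p-1+k}{k}t^{k(d-1)}\right)\frac{(1-t^d)^p(1-t^{d-1})^{n-p}}{(1-t)^n}.$$ In particular, the Hilbert series $H$ of a generic determinantal ideal with parameters $(n,p,d)$ equals the right-hand side.
   Context: The left-hand side is the Hilbert series of $K[x_1,\dots,x_n]/I$ for a generic determinantal ideal $I$: the ideal generated by $p$ generic polynomials of degree $d$ in $K[x_1,\dots,x_n]$ together with the maximal minors of a $p\times(n-1)$ matrix of generic polynomials of degree $d-1$. *)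

(* Rational functions in one variable t over Q are
   modelled as {fraction {poly rat}}; 'X plays the role of t. *)
From HB Require Import structures.
From mathcomp Require Import all_boot all_order all_algebra.
From mathcomp Require Export fraction.
Set Implicit Arguments. Unset Strict Implicit. Unset Printing Implicit Defensive.
Import GRing.Theory.
Local Open Scope ring_scope.

(* P(x) : the (p-1)x(p-1) matrix whose (i,j) entry (1-based, i = i'+1,
   j = j'+1) is  sum_{k>=0} C(p-i,k) C(n-1-j,k) x^k.  The sum is finite:
   C(p-i,k) = 0 for k > p-i, and p-i < p < n, so summing over k < n
   captures every nonzero term. *)
Definition Pmat (n p : nat) (x : {poly rat}) : 'M[{poly rat}]_(p.-1) :=
  \matrix_(i < p.-1, j < p.-1)
     \sum_(k < n) ('C(p - i.+1, k) * 'C(n - 1 - j.+1, k))%:R *: x ^+ k.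

Notation RF := {fraction {poly rat}}.

Definition toRF (q : {poly rat}) : RF := tofrac q.

From HB Require Import structures.
From mathcomp Require Import all_boot all_order all_algebra fraction.
From mathcomp Require Import zify ring perm.
Import GRing.Theory.
Local Open Scope ring_scope.

(* Write p = m + 1 and n = m + e + 2.  Reversing rows and columns turns P(y)
   into A D B^T with A = [C(1 + i, k)], B = [C(e + 1 + j, k)] and
   D = diag(y^k).  By Vandermonde, A = L T1 and B = L Tc, where L = [C(i, l)]
   is unitriangular and T1, Tc are the upper Toeplitz matrices of (1 + z) and
   (1 + z)^(e+1), so det P(y) = det (T1 D Tc^T).  Let W be the unitriangular
   Toeplitz matrix of (1 + z)^-(e+1): W Tc is the identity on its first m
   columns and T1 only reaches column m, so T1 D (W Tc)^T = diag(y^l) (I + yJ - E)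
   with J the shift and E supported on the last row.  Multiplying by the
   Toeplitz matrix of (1 + yz)^-1, the inverse of I + yJ, makes this triangular
   with a single nontrivial diagonal entry, which is sum_t C(e + t, t) y^t. *)

Section BinomialGram.
Local Set Implicit Arguments.
Local Unset Strict Implicit.
Variable R : comNzRingType.
Implicit Types (u c : nat -> R) (a f n : nat).

Lemma sum_ord_trunc (F : nat -> R) a n : (a <= n)%N ->
  (forall l, (a <= l)%N -> F l = 0) -> \sum_(l < n) F l = \sum_(l < a) F l.
Proof.
move=> le_an F0; rewrite (big_ord_widen n F le_an) [RHS]big_mkcond /=.
by apply: eq_bigr => l _; case: ltnP => // /F0.
Qed.

Lemma sum_ord_eq_nat n (F : 'I_n -> R) j (lt_jn : (j < n)%N) :
  \sum_(k < n) ((k : nat) == j)%:R * F k = F (Ordinal lt_jn).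
Proof.
rewrite (bigD1 (Ordinal lt_jn)) //= eqxx mul1r big1 ?addr0 // => k.
by rewrite -val_eqE /= => /negbTE ->; rewrite mul0r.
Qed.

Definition conv u c n : R := \sum_(s < n.+1) u s * c (n - s)%N.

(* [binseq a] and [negbin a] are the coefficient sequences of (1 + z)^a and
   (1 + z)^-a; the predecessor makes [negbin 0] the unit sequence. *)
Definition binseq a n : R := 'C(a, n)%:R.

Definition negbin a n : R := (-1) ^+ n * 'C((a + n).-1, n)%:R.

Lemma conv_binseq0 u n : conv u (binseq 0) n = u n.
Proof.
rewrite /conv big_ord_recr /= subnn /binseq bin0 mulr1 big1 ?add0r // => s _.
by rewrite bin0n subn_eq0 leqNgt ltn_ord mulr0.
Qed.

Lemma conv_binseqS u f n :
  conv u (binseq f.+1) n.+1 = conv u (binseq f) n.+1 + conv u (binseq f) n.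
Proof.
rewrite /conv big_ord_recr [X in _ = X + _]big_ord_recr /= subnn /binseq !bin0.
rewrite addrAC -big_split /=; congr (_ + _); apply: eq_bigr => s _.
have le_sn : (s <= n)%N by rewrite -ltnS.
by rewrite subSn // binS natrD mulrDr.
Qed.

Lemma negbin0 n : negbin 0 n = (n == 0)%:R.
Proof.
by case: n => [|n]; rewrite /negbin /= ?bin0 ?expr0 ?mulr1 // bin_small ?mulr0.
Qed.

Lemma negbinS a n : negbin a n.+1 = negbin a.+1 n.+1 + negbin a.+1 n.
Proof. by rewrite /negbin addSn !addnS /= binS natrD exprS; ring. Qed.

Lemma conv_negbin_binseq f a n : conv (negbin (f + a)) (binseq f) n = negbin a n.
Proof.
elim: f a n => [|f IHf] a n; first exact: conv_binseq0.
case: n => [|n]; first by rewrite /conv big_ord1 /negbin /binseq !bin0 !expr0 !mulr1.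
by rewrite conv_binseqS addSnnS !IHf (negbinS a n).
Qed.

Lemma conv_binseq a b n : conv (binseq a) (binseq b) n = binseq (a + b) n.
Proof.
rewrite /binseq -binomial.Vandermonde natr_sum.
by apply: eq_bigr => s _; rewrite natrM.
Qed.

Lemma binseq1_gt1 t : (1 < t)%N -> binseq 1 t = 0.
Proof. by move=> lt1t; rewrite /binseq bin_small. Qed.

Definition toeplitz_mx m N c : 'M[R]_(m, N) :=
  \matrix_(i, j) if (i <= j)%N then c (j - i)%N else 0.

Lemma sum_toeplitz_window u c a k :
  \sum_(0 <= b < k.+1) (if (a <= b)%N then u (b - a)%N else 0) *
                       (if (b <= k)%N then c (k - b)%N else 0)
  = if (a <= k)%N then conv u c (k - a) else 0.
Proof.
case: leqP => [le_ak | lt_ka]; last first.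
  rewrite big_nat_cond big1 // => b /andP[/andP[_ lt_bk] _].
  by rewrite leqNgt (leq_trans lt_bk lt_ka) mul0r.
rewrite (big_cat_nat (leq0n a) (leqW le_ak)) /= big_nat_cond big1 ?add0r.
  rewrite -{1}(add0n a) big_addn subSn // big_mkord; apply: eq_bigr => s _.
  have le_sak : (s + a <= k)%N by have := ltn_ord s; lia.
  by rewrite leq_addl addnK le_sak addnC subnDA.
by move=> b /andP[/andP[_ lt_ba] _]; rewrite leqNgt lt_ba mul0r.
Qed.

Lemma mul_toeplitz_mxE m N u c (a : 'I_m) (k : 'I_N) : (k <= m)%N ->
  (toeplitz_mx m m u *m toeplitz_mx m N c) a k
  = (if (a <= k)%N then conv u c (k - a) else 0)
    - (k == m :> nat)%:R * (u (m - a)%N * c 0%N).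
Proof.
move=> le_km; rewrite mxE -sum_toeplitz_window.
set F := fun b : nat =>
  (if (a <= b)%N then u (b - a)%N else 0) * (if (b <= k)%N then c (k - b)%N else 0).
transitivity (\sum_(0 <= b < m) F b).
  by rewrite big_mkord; apply: eq_bigr => b _; rewrite !mxE.
case: ltngtP le_km => // [lt_km | eq_km] _.
  rewrite mul0r subr0 (big_cat_nat (leq0n k.+1) lt_km) /=.
  rewrite [X in _ + X]big_nat_cond [X in _ + X]big1 ?addr0 //.
  by move=> b /andP[/andP[lt_kb _] _]; rewrite /F (leqNgt b) lt_kb mulr0.
by rewrite eq_km big_nat_recr //= mul1r /F leqnn subnn ltnW // addrK eq_km.
Qed.

Lemma mul_toeplitz_mx m u c :
  toeplitz_mx m m u *m toeplitz_mx m m c = toeplitz_mx m m (conv u c).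
Proof.
apply/matrixP => a k.
rewrite mul_toeplitz_mxE; last exact: ltnW.
by rewrite (ltn_eqF (ltn_ord k)) mul0r subr0 mxE.
Qed.

Lemma toeplitz_mx_id m c : (forall n, c n = (n == 0)%:R) -> toeplitz_mx m m c = 1%:M.
Proof.
move=> c_delta; apply/matrixP => i j; rewrite !mxE c_delta subn_eq0 -val_eqE.
by case: ltngtP => h; rewrite ?(ltnW h) ?leqNgt ?h.
Qed.

Lemma toeplitz_mx_bidiag m N c : (forall t, (1 < t)%N -> c t = 0) ->
  toeplitz_mx m N c
  = \matrix_(i, j) ((j == i :> nat)%:R * c 0%N + (j == i.+1 :> nat)%:R * c 1%N).
Proof.
move=> c_gt1; apply/matrixP => i j; rewrite !mxE.
case: leqP => [le_ij | lt_ji]; last first.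
  by rewrite ltn_eqF // ltn_eqF ?mul0r ?addr0 // ltnS ltnW.
have -> : (j : nat) = (i + (j - i))%N by rewrite subnKC.
rewrite addKn; case: (j - i)%N => [|[|t]].
- by rewrite addn0 eqxx (ltn_eqF (ltnSn i)) mulr1n mul1r mul0r addr0.
- by rewrite addn1 eqxx (gtn_eqF (ltnSn i)) mulr1n mul1r mul0r add0r.
- by rewrite c_gt1 // !gtn_eqF ?mul0r ?addr0 //; lia.
Qed.

Definition pascal_mx m : 'M[R]_m := \matrix_(i, j) 'C(i, j)%:R.

Lemma det_pascal_mx m : \det (pascal_mx m) = 1.
Proof.
rewrite det_trig; last by apply/is_trig_mxP => i j lt_ij; rewrite mxE bin_small.
by rewrite big1 // => i _; rewrite mxE binn.
Qed.

Definition binomial_mx m N a : 'M[R]_(m, N) := \matrix_(i, k) 'C(a + i, k)%:R.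

Lemma binomial_mx_pascal m N a :
  binomial_mx m N a = pascal_mx m *m toeplitz_mx m N (binseq a).
Proof.
apply/matrixP => i k; rewrite !mxE addnC.
pose G l := binseq i l * (if (l <= k)%N then binseq a (k - l) else 0).
have G0 l : (minn i k < l)%N -> G l = 0.
  rewrite gtn_min => /orP[lt_il | lt_kl]; first by rewrite /G /binseq bin_small ?mul0r.
  by rewrite /G leqNgt lt_kl mulr0.
have le_min_k : ((minn i k).+1 <= k.+1)%N by rewrite ltnS geq_minr.
have le_min_m : ((minn i k).+1 <= m)%N by rewrite (leq_ltn_trans (geq_minl i k)).
transitivity (\sum_(l < k.+1) G l).
  rewrite -[LHS]/(binseq (i + a) k) -conv_binseq; apply: eq_bigr => l _.
  by rewrite /G -ltnS ltn_ord.
rewrite (sum_ord_trunc le_min_k G0) -(sum_ord_trunc le_min_m G0).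
by apply: eq_bigr => l _; rewrite !mxE.
Qed.

Definition powers_mx n (x : R) : 'M[R]_n := diag_mx (\row_(k < n) x ^+ k).

Lemma det_powers_mx n x : \det (powers_mx n x) = x ^+ 'C(n, 2).
Proof.
rewrite det_diag; under eq_bigr do rewrite mxE.
by rewrite prodrXr -bin2_sum big_mkord.
Qed.

Definition lastrow_mx m (v : 'rV[R]_m) : 'M[R]_m :=
  \matrix_(i, j) ((i.+1 == m)%:R * v 0 j).

Lemma mul_lastrow_mx m (v : 'rV[R]_m) (A : 'M_m) :
  lastrow_mx v *m A = lastrow_mx (v *m A).
Proof.
apply/matrixP => i j; rewrite !mxE mulr_sumr; apply: eq_bigr => k _.
by rewrite !mxE mulrA.
Qed.

Lemma det_1_sub_lastrow_mx m (v : 'rV[R]_m.+1) :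
  \det (1%:M - lastrow_mx v) = 1 - v 0 ord_max.
Proof.
have lastE (i : 'I_m.+1) : (i.+1 == m.+1) = (i == ord_max) by [].
have not_last (i : 'I_m.+1) : (i < m)%N -> (i == ord_max) = false.
  by move=> lt_im; apply/negbTE; rewrite -val_eqE /= neq_ltn lt_im.
rewrite det_trig; last first.
  apply/is_trig_mxP => i j lt_ij; rewrite !mxE lastE not_last; last first.
    by have := ltn_ord j; lia.
  have -> : (i == j) = false by apply/negbTE; rewrite -val_eqE /= neq_ltn lt_ij.
  by rewrite mul0r subrr.
rewrite big_ord_recr /= big1 => [|i _]; rewrite !mxE lastE ?eqxx ?mul1r //.
by rewrite not_last //= mul0r subr0.
Qed.

Lemma det_toeplitz_mx m c : \det (toeplitz_mx m m c) = c 0%N ^+ m.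
Proof.
rewrite -det_tr det_trig; last first.
  by apply/is_trig_mxP => i j lt_ij; rewrite !mxE leqNgt lt_ij.
rewrite (eq_bigr (fun=> c 0%N)) ?prodr_const ?card_ord // => i _.
by rewrite !mxE leqnn subnn.
Qed.

Lemma det_rev_mx m (A : 'M[R]_m) :
  \det (\matrix_(i, j) A (rev_ord i) (rev_ord j)) = \det A.
Proof.
pose s := perm (@rev_ord_inj m).
have -> : \matrix_(i, j) A (rev_ord i) (rev_ord j) = row_perm s (col_perm s A).
  by apply/matrixP => i j; rewrite !mxE !permE.
rewrite row_permE col_permE !det_mulmx !det_perm odd_permV mulrCA -exprD.
by rewrite addnn -mul2n exprM sqrrN !expr1n mulr1.
Qed.

Lemma conv_bidiag_geom x n :
  conv (fun t => (t == 0)%:R + (t == 1)%:R * x) (fun t => (- x) ^+ t) n = (n == 0)%:R.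
Proof.
rewrite /conv; case: n => [|n]; first by rewrite big_ord1 /= mulr0n mul0r addr0 mul1r.
rewrite 2!big_ord_recl big1 => [|s _]; last by rewrite /= mulr0n mul0r addr0 mul0r.
by rewrite /= subn1 /= mulr0n mul0r addr0 mul1r mulr1n add0r exprS addr0; ring.
Qed.

Section GramFactorization.
Variables (m N e : nat) (x : R).
Hypothesis lt_mN : (m < N)%N.

Local Notation T1 := (toeplitz_mx m N (binseq 1)).
Local Notation Tc := (toeplitz_mx m N (binseq e.+1)).
Local Notation W := (toeplitz_mx m m (negbin e.+1)).
Local Notation Z := (toeplitz_mx m m (fun t => (- x) ^+ t)).
Local Notation r := (\row_(a < m) negbin e.+1 (m - a)).
Local Notation B := (toeplitz_mx m m (fun t => (t == 0)%:R + (t == 1)%:R * x)).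

Lemma det_binomial_gram_toeplitz :
  \det (binomial_mx m N 1 *m powers_mx N x *m (binomial_mx m N e.+1)^T)
  = \det (T1 *m powers_mx N x *m Tc^T).
Proof.
rewrite !binomial_mx_pascal trmx_mul !mulmxA det_mulmx det_tr det_pascal_mx mulr1.
by rewrite -!mulmxA det_mulmx det_pascal_mx mul1r.
Qed.

Lemma negbin_mul_toeplitzE (a : 'I_m) (k : 'I_N) : (k <= m)%N ->
  (W *m Tc) a k = (a == k :> nat)%:R - (k == m :> nat)%:R * negbin e.+1 (m - a).
Proof.
move=> le_km; rewrite mul_toeplitz_mxE //.
have := conv_negbin_binseq e.+1 0; rewrite addn0 => ->.
rewrite negbin0 subn_eq0 /binseq bin0 mulr1 (eqn_leq a).
by case: leqP.
Qed.

Lemma toeplitz_gram_negbin :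
  T1 *m powers_mx N x *m (W *m Tc)^T
  = powers_mx m x *m (B - lastrow_mx (x *: r)).
Proof.
apply/matrixP => l a.
have lt_l1N : (l.+1 < N)%N by apply: leq_ltn_trans lt_mN.
have := negbin_mul_toeplitzE; move: (W *m Tc) => V VE.
rewrite (@toeplitz_mx_bidiag m N (binseq 1)); last exact: binseq1_gt1.
rewrite (@toeplitz_mx_bidiag m m (fun t => (t == 0)%:R + (t == 1)%:R * x)); last first.
  by case=> [|[|t]] //= _; rewrite mul0r addr0.
rewrite /powers_mx mul_mx_diag mul_diag_mx !mxE.
under eq_bigr => k _ do rewrite !mxE !mulr1 mulrDl mulrDl -!mulrA.
rewrite big_split /= (sum_ord_eq_nat (fun k => x ^+ k * V a k) lt_l1N).
rewrite (sum_ord_eq_nat (fun k => x ^+ k * V a k) (ltnW lt_l1N)).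
rewrite !VE /= ?(ltn_ord l) ?(ltnW (ltn_ord l)) //.
by rewrite (ltn_eqF (ltn_ord l)) mul0r exprS; ring.
Qed.

Lemma bidiag_lastrow_mul_geom :
  (B - lastrow_mx (x *: r)) *m Z = 1%:M - lastrow_mx ((x *: r) *m Z).
Proof.
rewrite mulmxBl mul_toeplitz_mx mul_lastrow_mx toeplitz_mx_id //.
exact: conv_bidiag_geom.
Qed.

Lemma det_binomial_gram_lastrow :
  \det (binomial_mx m N 1 *m powers_mx N x *m (binomial_mx m N e.+1)^T)
  = x ^+ 'C(m, 2) * \det (1%:M - lastrow_mx ((x *: r) *m Z)).
Proof.
rewrite det_binomial_gram_toeplitz.
transitivity (\det (T1 *m powers_mx N x *m Tc^T *m W^T *m Z)).
  by rewrite !det_mulmx det_tr !det_toeplitz_mx /negbin bin0 !expr0 mul1r !expr1n !mulr1.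
by rewrite -[_ *m W^T]mulmxA -trmx_mul toeplitz_gram_negbin -mulmxA det_mulmx
  det_powers_mx bidiag_lastrow_mul_geom.
Qed.

End GramFactorization.

Lemma one_sub_negbin_geom e (x : R) m :
  1 - x * \sum_(a < m.+1) negbin e.+1 (m.+1 - a) * (- x) ^+ (m - a)
  = \sum_(t < m.+2) x ^+ t *+ 'C(e + t, t).
Proof.
rewrite [RHS]big_ord_recl expr0 addn0 bin0 mulr1n; congr (_ + _).
rewrite (reindex_inj rev_ord_inj) mulr_sumr -sumrN; apply: eq_bigr => t _.
have lt_tm := ltn_ord t.
have -> : (m.+1 - rev_ord t = t.+1)%N by rewrite /=; lia.
have -> : (m - rev_ord t = t)%N by rewrite /=; lia.
rewrite /negbin /bump /= (exprNn x).
have sgn_sq : (-1) ^+ t * (-1) ^+ t = 1 :> R by rewrite -exprMn mulrNN mulr1 expr1n.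
transitivity ((-1) ^+ t * (-1) ^+ t * (x ^+ t.+1 * 'C(e + t.+1, t.+1)%:R)).
  by rewrite !exprS; ring.
by rewrite sgn_sq mul1r mulr_natr.
Qed.

Lemma det_binomial_gram m N e x : (m < N)%N ->
  \det (binomial_mx m N 1 *m powers_mx N x *m (binomial_mx m N e.+1)^T)
  = x ^+ 'C(m, 2) * \sum_(t < m.+1) x ^+ t *+ 'C(e + t, t).
Proof.
move=> lt_mN; rewrite det_binomial_gram_lastrow //; congr (_ * _).
case: m {lt_mN} => [|m]; first by rewrite det_mx00 big_ord1 expr0 addn0 bin0 mulr1n.
rewrite det_1_sub_lastrow_mx -one_sub_negbin_geom !mxE mulr_sumr; congr (1 - _).
by apply: eq_bigr => a _; rewrite !mxE -ltnS ltn_ord mulrA.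
Qed.

End BinomialGram.

Arguments binomial_mx {R} m N a.

Lemma Pmat_rev_binomial_gram m e (y : {poly rat}) :
  Pmat (m.+1 + e.+1) m.+1 y = \matrix_(i, j)
    (binomial_mx m _ 1 *m powers_mx (m.+1 + e.+1) y *m (binomial_mx m _ e.+1)^T)
      (rev_ord i) (rev_ord j).
Proof.
apply/matrixP => i j; rewrite /powers_mx mul_mx_diag !mxE.
apply: eq_bigr => k _; rewrite !mxE.
have -> : (m.+1 - i.+1 = 1 + rev_ord i)%N by have := ltn_ord i; rewrite /=; lia.
have -> : (m.+1 + e.+1 - 1 - j.+1 = e.+1 + rev_ord j)%N.
  by have := ltn_ord j; rewrite /=; lia.
by rewrite scaler_nat mulrnA mulr_natl mulr_natr.
Qed.

Theorem corollary1 (n p d : nat) (hn : (0 < n)%N) (hp : (0 < p)%N)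
    (hd : (0 < d)%N) (hnp : (p < n)%N) :
  toRF (\det (Pmat n p ('X ^+ (d - 1))))
      / toRF ('X ^+ ((d - 1) * 'C(p - 1, 2)))
      * (toRF ((1 - 'X ^+ d) ^+ p * (1 - 'X ^+ (d - 1)) ^+ (n - p))
           / toRF ((1 - 'X) ^+ n))
  = toRF (\sum_(k < p) ('C(n - p - 1 + k, k))%:R *: 'X ^+ (k * (d - 1)))
      * (toRF ((1 - 'X ^+ d) ^+ p * (1 - 'X ^+ (d - 1)) ^+ (n - p))
           / toRF ((1 - 'X) ^+ n)).
Proof.
case: p hp hnp => [|m] // _ hnp.
have [e ->] : exists e, n = (m.+1 + e.+1)%N by exists (n - m.+2)%N; lia.
set y : {poly rat} := 'X ^+ (d - 1).
rewrite Pmat_rev_binomial_gram det_rev_mx det_binomial_gram; last first.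
  by rewrite addSn ltnS leq_addr.
rewrite [m.+1.-1]/=.
have -> : 'X ^+ ((d - 1) * 'C(m.+1 - 1, 2)) = y ^+ 'C(m, 2) by rewrite exprM subSS subn0.
have -> : \sum_(k < m.+1)
           ('C(m.+1 + e.+1 - m.+1 - 1 + k, k)%:R : rat) *: 'X ^+ (k * (d - 1))
         = \sum_(t < m.+1) y ^+ t *+ 'C(e + t, t).
  apply: eq_bigr => k _; rewrite scaler_nat mulnC exprM.
  by have -> : (m.+1 + e.+1 - m.+1 - 1 = e)%N by lia.
rewrite /toRF tofracM; congr (_ * _).
rewrite mulrAC divff ?mul1r //.
by rewrite tofrac_eq0 expf_neq0 // expf_neq0 // polyX_eq0.
Qed.
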